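(* Let $\Phi$ be a Leonard system in $\mathcal A$ with parameter array $(\theta_i,\theta^*_i,i=0..d;\varphi_j,\phi_j,j=1..d)$ and scalars $k_i$ as defined below. Then $$k_i=\frac{\varphi_1\varphi_2\cdots\varphi_i}{\phi_1\phi_2\cdots\phi_i}\cdot\frac{\eta^*_d(\theta^*_0)}{\tau^*_i(\theta^*_i)\,\eta^*_{d-i}(\theta^*_i)}\qquad(0\le i\le d).$$
   Context: Let $\mathbb K$ be a field, $d\ge 0$ an integer, and $\mathcal A$ a $\mathbb K$-algebra isomorphic to $\mathrm{Mat}_{d+1}(\mathbb K)$, with identity $I$ and trace $\mathrm{tr}$. An element $A\in\mathcal A$ is multiplicity-free if it has $d+1$ mutually distinct eigenvalues in $\mathbb K$; if $\theta_0,\dots,\theta_d$ is an ordering of them, the primitive idempotent of $A$ associated with $\theta_i$ is $E_i=\prod_{j\ne i}(A-\theta_jI)/(\theta_i-\theta_j)$. A Leonard system in $\mathcal A$ is a sequence $\Phi=(A;A^*;\{E_i\}_{i=0}^d;\{E^*_i\}_{i=0}^d)$ such that: (i) $A,A^*$ are multiplicity-free; (ii) $E_0,\dots,E_d$ is an ordering of the primitive idempotents of $A$; (iii) $E^*_0,\dots,E^*_d$ is an ordering of those of $A^*$; (iv) $E_iA^*E_j=0$ if $|i-j|>1$ and $\ne0$ if $|i-j|=1$ $(0\le i,j\le d)$; (v) $E^*_iAE^*_j=0$ if $|i-j|>1$ and $\neq0$ if $|i-j|=1$ $(0\le i,j\le d)$. $\theta_i$ (resp. $\theta^*_i$) is the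 eigenvalue of $A$ (resp. $A^*$) for $E_i$ (resp. $E^*_i$). Define $\nu=\mathrm{tr}(E_0E^*_0)^{-1}$ (the trace is nonzero) and $k_i=\nu\,\mathrm{tr}(E^*_iE_0)$ $(0\le i\le d)$. It is known that there exist unique nonzero scalars $\varphi_1,\dots,\varphi_d\in\mathbb K$ (first split sequence) such that for some $\mathbb K$-algebra isomorphism $\natural:\mathcal A\to\mathrm{Mat}_{d+1}(\mathbb K)$, $A^\natural$ is lower bidiagonal with diagonal $\theta_0,\dots,\theta_d$ and subdiagonal entries all $1$, and $A^{*\natural}$ is upper bidiagonal with diagonal $\theta^*_0,\dots,\theta^*_d$ and $(A^{*\natural})_{i-1,i}=\varphi_i$. The second split sequence $\phi_1,\dots,\phi_d$ is the first split sequence of $(A;A^*;\{E_{d-i}\}_{i=0}^d;\{E^*_i\}_{i=0}^d)$. Polynomials: $\tau^*_i=\prod_{h=0}^{i-1}(\lambda-\theta^*_h)$, $\eta^*_i=\prod_{h=0}^{i-1}(\lambda-\theta^*_{d-h})$. Empty products equal $1$. *)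

From HB Require Import structures.
From mathcomp Require Import all_boot all_order all_algebra.
Set Implicit Arguments. Unset Strict Implicit. Unset Printing Implicit Defensive.
Import Order.TTheory GRing.Theory Num.Theory.
Local Open Scope ring_scope.

Section LS.
Variable K : fieldType.
Variable d : nat.
Local Notation n := d.+1.

(* the algebra A is taken to be Mat_{d+1}(K) itself; sequences indexed by nat *)

Definition prim_idem (A : 'M[K]_n) (th : nat -> K) (i : nat) : 'M[K]_n :=
  \prod_(j < n | val j != i) ((th i - th j)^-1 *: (A - (th j)%:M)).

(* th_0..th_d is an ordering of d+1 mutually distinct eigenvalues of A
   (so A is multiplicity-free and th determines an ordering E_0..E_d of its
   primitive idempotents) *)
Definition eig_ordering (A : 'M[K]_n) (th : nat -> K) : Prop :=
  (forall i j : 'I_n, th i = th j -> i = j) /\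
  (forall i : 'I_n, eigenvalue A (th i)).

Definition tridiag_rel (A : 'M[K]_n) (th : nat -> K) (B : 'M[K]_n) : Prop :=
  forall i j : 'I_n,
    ((i.+1 < j)%N \/ (j.+1 < i)%N ->
       prim_idem A th i * B * prim_idem A th j = 0) /\
    ((i.+1 = j)%N \/ (j.+1 = i)%N ->
       prim_idem A th i * B * prim_idem A th j != 0).

(* Leonard system (A; A*; {E_i}; {E*_i}), with E_i = prim_idem A th i and
   E*_i = prim_idem As ths i *)
Definition leonard_system (A As : 'M[K]_n) (th ths : nat -> K) : Prop :=
  [/\ eig_ordering A th, eig_ordering As ths,
      tridiag_rel A th As & tridiag_rel As ths A].

Definition alg_iso (f : 'M[K]_n -> 'M[K]_n) : Prop :=
  [/\ bijective f,
      forall (a : K) (x y : 'M[K]_n), f (a *: x + y) = a *: f x + f y,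
      forall x y : 'M[K]_n, f (x * y) = f x * f y
    & f 1 = 1].

Definition first_split_seq (A As : 'M[K]_n) (th ths phi : nat -> K) : Prop :=
  (forall j, (1 <= j <= d)%N -> phi j != 0) /\
  exists f, alg_iso f /\
    f A = \matrix_(i, j) (if val i == val j then th i
                          else if val i == (val j).+1 then 1 else 0) /\
    f As = \matrix_(i, j) (if val i == val j then ths i
                           else if val j == (val i).+1 then phi j else 0).

Definition tau_s (ths : nat -> K) (i : nat) : {poly K} :=
  \prod_(h < i) ('X - (ths h)%:P).
Definition eta_s (ths : nat -> K) (i : nat) : {poly K} :=
  \prod_(h < i) ('X - (ths (d - h)%N)%:P).

Definition nu_LS (A As : 'M[K]_n) (th ths : nat -> K) : K :=
  (\tr (prim_idem A th 0 * prim_idem As ths 0))^-1.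
Definition k_LS (A As : 'M[K]_n) (th ths : nat -> K) (i : nat) : K :=
  nu_LS A As th ths * \tr (prim_idem As ths i * prim_idem A th 0).

End LS.

From HB Require Import structures.
From mathcomp Require Import all_boot all_order all_algebra.
From mathcomp Require Import ring.
Set Implicit Arguments. Unset Strict Implicit. Unset Printing Implicit Defensive.
Import Order.TTheory GRing.Theory Num.Theory.
Local Open Scope ring_scope.

(* In a split basis, A* is upper bidiagonal with diagonal th*_i and
   superdiagonal phi_i, while A is lower bidiagonal with subdiagonal 1.  The
   primitive idempotents of an upper bidiagonal matrix with distinct diagonal
   entries are rank one, E*_s = v_s w_s^T, where the right and left
   eigenvectors v_s, w_s (normalised by v_s(s) = w_s(s) = 1) are explicit
   products in phi and th*.  Traces of words in E*_i, E_0 and A thus reduce to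
   coordinates of these vectors: the first split basis gives
   tr(E*_i A^i E*_0 E_0) = v_i(0) tr(E*_0 E_0), and the second one (th
   reversed, where E_0 = e_d v^T) gives
   w_0(d) tr(E*_i E_0) = w_i(d) tr(E*_i A^i E*_0 E_0).  As an algebra
   automorphism scales traces by a nonzero constant, k_i = w_i(d) v_i(0) / w_0(d),
   which is the stated product formula. *)

Lemma prod_nat_neq0 (K : fieldType) (F : nat -> K) a b :
  (forall r, (a <= r < b)%N -> F r != 0) -> \prod_(a <= r < b) F r != 0.
Proof.
by move=> F_neq0; rewrite prodf_seq_neq0; apply/allP => r; rewrite mem_index_iota => /F_neq0.
Qed.

Section CyclicFunctional.
Variables (K : fieldType) (d : nat).
Local Notation n := d.+1.
Variable phi : 'M[K]_n -> K.
Hypothesis phi_lin : forall a x y, phi (a *: x + y) = a * phi x + phi y.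
Hypothesis phi_cyclic : forall x y, phi (x *m y) = phi (y *m x).

Lemma cyclic_functional_mxtrace x : phi x = phi (delta_mx 0 0) * \tr x.
Proof.
have phi0 : phi 0 = 0.
  have := phi_lin 1 0 0; rewrite scale1r addr0 mul1r => h.
  by apply: (addrI (phi 0)); rewrite addr0 -h.
have phiD : {morph phi : x y / x + y}.
  by move=> u v; rewrite -[u]scale1r phi_lin mul1r scale1r.
have phiZ a u : phi (a *: u) = a * phi u by rewrite -[_ *: _]addr0 phi_lin phi0 addr0.
have phi_delta (i j : 'I_n) : phi (delta_mx i j) = phi (delta_mx 0 0) *+ (i == j).
  rewrite -(mul_delta_mx (0 : 'I_n)) phi_cyclic mul_delta_mx_cond eq_sym.
  by case: eqP; rewrite ?phi0.
rewrite {1}[x]matrix_sum_delta (big_morph phi phiD phi0) /mxtrace big_distrr.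
apply: eq_bigr => i _; rewrite (big_morph phi phiD phi0) (bigD1 i) //= big1 ?addr0.
  by rewrite phiZ phi_delta eqxx mulrC.
by move=> j /negbTE ji; rewrite phiZ phi_delta eq_sym ji mulr0.
Qed.

End CyclicFunctional.

Section AlgebraIsomorphism.
Variables (K : fieldType) (d : nat).
Local Notation n := d.+1.
Variable f : 'M[K]_n -> 'M[K]_n.
Hypothesis f_iso : alg_iso f.

Lemma alg_iso_lin a x y : f (a *: x + y) = a *: f x + f y.
Proof. by case: f_iso. Qed.

Lemma alg_isoM x y : f (x * y) = f x * f y.
Proof. by case: f_iso. Qed.

Lemma alg_iso0 : f 0 = 0.
Proof.
have := alg_iso_lin 1 0 0; rewrite !scale1r addr0 => h.
by apply: (addrI (f 0)); rewrite addr0 -h.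
Qed.

Lemma alg_isoZ a x : f (a *: x) = a *: f x.
Proof. by rewrite -[_ *: _]addr0 alg_iso_lin alg_iso0 !addr0. Qed.

Lemma alg_isoB x y : f (x - y) = f x - f y.
Proof. by rewrite -scaleN1r addrC alg_iso_lin addrC scaleN1r. Qed.

Lemma alg_iso_scalar a : f a%:M = a%:M.
Proof. by case: f_iso => _ _ _ f1; rewrite -scalemx1 alg_isoZ -[1%:M]/1 f1 scalemx1. Qed.

Lemma alg_isoX x i : f (x ^+ i) = f x ^+ i.
Proof.
case: f_iso => _ _ _ f1.
by elim: i => [|i IH]; rewrite ?expr0 // !exprS alg_isoM IH.
Qed.

Lemma alg_iso_prim_idem M th i : f (prim_idem M th i) = prim_idem (f M) th i.
Proof.
case: f_iso => _ _ _ f1; rewrite /prim_idem (big_morph f alg_isoM f1).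
by apply: eq_bigr => j _; rewrite alg_isoZ alg_isoB alg_iso_scalar.
Qed.

Lemma alg_iso_mxtrace : exists2 c : K, c != 0 & forall x, \tr (f x) = c * \tr x.
Proof.
have tr_f := cyclic_functional_mxtrace (phi := fun x => \tr (f x)).
have {}tr_f x : \tr (f x) = \tr (f (delta_mx 0 0)) * \tr x.
  apply: tr_f => [a u v|u v]; first by rewrite alg_iso_lin linearD linearZ.
  by rewrite !mulmxE !alg_isoM -!mulmxE mxtrace_mulC.
have tr_delta : \tr (delta_mx 0 0 : 'M[K]_n) = 1.
  by rewrite /mxtrace (bigD1 0) //= big1 ?mxE ?addr0 // => i /negbTE i0; rewrite mxE i0.
exists (\tr (f (delta_mx 0 0))) => //; apply/eqP => c0.
case: f_iso => -[g _ fg] _ _ _.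
by have /eqP := tr_f (g (delta_mx 0 0)); rewrite fg c0 mul0r tr_delta oner_eq0.
Qed.

Lemma alg_iso_mxtrace_eq a b x y :
  a * \tr (f x) = b * \tr (f y) -> a * \tr x = b * \tr y.
Proof.
by have [c c_neq0 tr_f] := alg_iso_mxtrace; rewrite !tr_f mulrCA [RHS]mulrCA => /(mulfI c_neq0).
Qed.

Lemma alg_iso_mxtrace_neq0 x : \tr (f x) != 0 -> \tr x != 0.
Proof. by have [c _ tr_f] := alg_iso_mxtrace; rewrite tr_f mulf_eq0 negb_or => /andP[]. Qed.

End AlgebraIsomorphism.

Section PrimitiveIdempotentOuter.
Variables (K : fieldType) (d : nat).
Local Notation n := d.+1.

Lemma prim_idem_eigvec (M : 'M[K]_n) th i a (x : 'cV_n) : M *m x = a *: x ->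
  prim_idem M th i *m x =
  (\prod_(j < n | val j != i) ((th i - th j)^-1 * (a - th j))) *: x.
Proof.
move=> Mx; apply: (big_rec2 (fun P c => P *m x = c *: x)) => [|j P c _ IH].
  by rewrite mul1mx scale1r.
rewrite -mulmxE -mulmxA IH -scalemxAr -!scalemxAl mulmxBl Mx mul_scalar_mx.
by rewrite -scalerBl !scalerA; congr (_ *: _); ring.
Qed.

Lemma lagrange_prod_node (th : nat -> K) (r s : 'I_n) : (forall i j : 'I_n, th i = th j -> i = j) ->
  \prod_(j < n | val j != s) ((th s - th j)^-1 * (th r - th j)) = (r == s)%:R.
Proof.
move=> th_inj; have [->|rs] := eqVneq r s.
  by rewrite big1 // => j js; rewrite mulVf // subr_eq0; apply: contra js => /eqP/th_inj->.
by rewrite (bigD1 r) //= subrr mulr0 mul0r.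
Qed.

Lemma eigvec_orthogonal (M : 'M[K]_n) (x y : 'cV_n) a b :
  M *m x = b *: x -> M^T *m y = a *: y -> a != b -> y^T *m x = 0.
Proof.
move=> Mx MTy ab.
have yM : y^T *m M = a *: y^T by rewrite -[M]trmxK -trmx_mul MTy linearZ.
have : a *: (y^T *m x) = b *: (y^T *m x).
  by rewrite scalemxAl -yM -mulmxA Mx scalemxAr.
by move/eqP; rewrite -subr_eq0 -scalerBl scaler_eq0 subr_eq0 (negbTE ab) => /eqP.
Qed.

Section EigenvectorFamilies.
Variables (M : 'M[K]_n) (t : nat -> K) (x y : 'I_n -> 'cV[K]_n).
Hypothesis t_inj : forall i j : 'I_n, t i = t j -> i = j.
Hypothesis M_x : forall r : 'I_n, M *m x r = t r *: x r.
Hypothesis MT_y : forall r : 'I_n, M^T *m y r = t r *: y r.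
Hypothesis y_x : forall r : 'I_n, (y r)^T *m x r = 1%:M.

Lemma eigvec_biorthogonal (r s : 'I_n) : (y s)^T *m x r = (r == s)%:R%:M.
Proof.
have [->|rs] := eqVneq r s; first exact: y_x.
rewrite mulr0n raddf0; apply: (eigvec_orthogonal (M_x r) (MT_y s)).
by apply: contra rs => /eqP/t_inj->.
Qed.

(* The columns [x r] form a basis, with dual basis [y r]; both sides of the
   identity act on it by [x r |-> (r == s) x r]. *)
Lemma prim_idem_eigvec_outer (s : 'I_n) : prim_idem M t s = x s *m (y s)^T.
Proof.
set X := \matrix_(k, r) x r k 0; set Y := \matrix_(k, r) y r k 0.
have mulX (P : 'M_n) : P *m X = \matrix_(k, r) (P *m x r) k 0.
  by apply/matrixP => k r; rewrite !mxE; apply: eq_bigr => j _; rewrite mxE.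
have YX : Y^T *m X = 1%:M.
  apply/matrixP => s' r; move/matrixP/(_ 0 0): (eigvec_biorthogonal r s').
  by rewrite !mxE eq_sym mulr1n => <-; apply: eq_bigr => k _; rewrite !mxE.
rewrite -[LHS]mulmx1 -[RHS]mulmx1 -(mulmx1C YX) !mulmxA; congr (_ *m _).
have col_eq r : prim_idem M t s *m x r = x s *m (y s)^T *m x r.
  rewrite (prim_idem_eigvec _ _ (M_x r)) lagrange_prod_node // -mulmxA eigvec_biorthogonal.
  by rewrite mul_mx_scalar; case: eqP => [->|]; rewrite ?scale0r.
by rewrite !mulX; apply/matrixP => k r; rewrite mxE [RHS]mxE col_eq.
Qed.

End EigenvectorFamilies.
End PrimitiveIdempotentOuter.

Section UpperBidiagonal.
Variables (K : fieldType) (d : nat).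
Local Notation n := d.+1.

Definition upper_bidiag (t ph : nat -> K) : 'M[K]_n := \matrix_(i, j)
  (if val i == val j then t i else if val j == (val i).+1 then ph j else 0).

(* Right and left eigenvectors of [upper_bidiag t ph] for the eigenvalue
   [t s], normalised to have entry 1 at index [s]. *)
Definition bidiag_right_eigvec (t ph : nat -> K) (s : nat) : 'cV[K]_n :=
  \col_k (if (k <= s)%N then \prod_(k <= r < s) (ph r.+1 / (t s - t r)) else 0).

Definition bidiag_left_eigvec (t ph : nat -> K) (s : nat) : 'cV[K]_n :=
  \col_k (if (s <= k)%N then \prod_(s.+1 <= r < k.+1) (ph r / (t s - t r)) else 0).

Lemma sum_ord_val_eq (F : 'I_n -> K) m :
  \sum_(l < n | l == m :> nat) F l = if (m < n)%N then F (inord m) else 0.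
Proof.
case: ltnP => hm; first by rewrite (big_pred1 (inord m)) // => l; rewrite /= -val_eqE /= inordK.
by rewrite big1 // => l /eqP lm; move: (ltn_ord l); rewrite lm ltnNge hm.
Qed.

Lemma lower_bidiag_trmx (th : nat -> K) :
  \matrix_(i, j) (if val i == val j then th i
                  else if val i == (val j).+1 then 1 else 0) =
  (upper_bidiag th (fun _ => 1))^T :> 'M[K]_n.
Proof. by apply/matrixP => i j; rewrite !mxE eq_sym; case: eqP => // ->. Qed.

Variables t ph : nat -> K.
Local Notation U := (upper_bidiag t ph).

Lemma upper_bidiag_mulmx_col (x : 'cV_n) (k : 'I_n) :
  (U *m x) k 0 = t k * x k 0 + \sum_(l < n | l == k.+1 :> nat) ph l * x l 0.
Proof.
rewrite mxE (bigD1 k) //= mxE eqxx; congr (_ + _).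
rewrite big_mkcond [RHS]big_mkcond; apply: eq_bigr => l _; rewrite mxE /=.
have [->|lk] := eqVneq l k; first by rewrite (ltn_eqF (ltnSn k)).
have kl : (k == l :> nat) = false by apply/negbTE; rewrite eq_sym; exact: lk.
by rewrite kl; case: ifP; rewrite ?mul0r.
Qed.

Lemma trmx_upper_bidiag_mulmx_col (x : 'cV_n) (k : 'I_n) :
  (U^T *m x) k 0 = t k * x k 0 + \sum_(l < n | k == l.+1 :> nat) ph k * x l 0.
Proof.
rewrite mxE (bigD1 k) //= !mxE eqxx; congr (_ + _).
rewrite big_mkcond [RHS]big_mkcond; apply: eq_bigr => l _; rewrite !mxE /=.
have [->|lk] := eqVneq l k; first by rewrite (ltn_eqF (ltnSn k)).
have lk' : (l == k :> nat) = false by apply/negbTE; exact: lk.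
by rewrite lk'; case: ifP; rewrite ?mul0r.
Qed.

Lemma bidiag_left_eigvec_lt s (k : 'I_n) : (k < s)%N -> bidiag_left_eigvec t ph s k 0 = 0.
Proof. by move=> ks; rewrite mxE leqNgt ks. Qed.

Lemma bidiag_left_eigvec_diag (s : 'I_n) : bidiag_left_eigvec t ph s s 0 = 1.
Proof. by rewrite mxE leqnn big_geq. Qed.

Hypothesis t_inj : forall i j : 'I_n, t i = t j -> i = j.

Lemma eigval_sub_neq0 r s : (r < n)%N -> (s < n)%N -> r != s -> t r - t s != 0.
Proof.
move=> hr hs rs; rewrite subr_eq0; apply: contra rs => /eqP e.
by have /(congr1 val) /= -> := @t_inj (Ordinal hr) (Ordinal hs) e.
Qed.

Local Notation v := (bidiag_right_eigvec t ph).
Local Notation w := (bidiag_left_eigvec t ph).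

Lemma upper_bidiag_right_eigvec s : (s < n)%N -> U *m v s = t s *: v s.
Proof.
move=> hs; apply/colP => k; rewrite upper_bidiag_mulmx_col sum_ord_val_eq !mxE.
case: (ltngtP k s) => [ks|sk|->].
- have hk1 : (k.+1 < n)%N by rewrite (leq_ltn_trans ks hs).
  rewrite hk1 inordK // ks (big_ltn ks).
  have := eigval_sub_neq0 hs (ltn_ord k) (negbT (gtn_eqF ks)).
  by move: (\prod_(_ <= _ < _) _) => P nz; field.
- rewrite !mulr0 add0r; case: ifP => // hk.
  by rewrite inordK // leqNgt ltnS (ltnW sk) mulr0.
- rewrite big_geq // mulr1; case: ifP => [hk|]; last by rewrite addr0.
  by rewrite inordK // ltnn mulr0 addr0.
Qed.

Lemma trmx_upper_bidiag_left_eigvec s : (s < n)%N -> U^T *m w s = t s *: w s.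
Proof.
move=> hs; apply/colP => -[[|k] hk]; rewrite trmx_upper_bidiag_mulmx_col /=.
  rewrite big_pred0 // addr0 !mxE; case: (posnP s) => [->|s0]; first by [].
  by rewrite leqNgt s0 !mulr0.
under eq_bigl do rewrite eqSS eq_sym.
rewrite sum_ord_val_eq (ltnW hk) !mxE inordK ?(ltnW hk) //.
case: (ltngtP s k.+1) => [sk|ks|->].
- rewrite ltnS in sk; rewrite sk /= big_nat_recr //=.
  have := eigval_sub_neq0 hs hk (negbT (ltn_eqF (sk : (s < k.+1)%N))).
  by move: (\prod_(_ <= _ < _) _) => P nz; field.
- by rewrite leqNgt (ltnW ks) !mulr0 add0r.
- by rewrite ltnn /= big_geq // mulr0 addr0.
Qed.

Lemma left_right_eigvec_dot s : (s < n)%N -> (w s)^T *m v s = 1%:M.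
Proof.
move=> hs; apply/matrixP => a b; rewrite !ord1 !mxE (bigD1 (Ordinal hs)) //=.
rewrite !mxE /= leqnn !big_geq // mulr1 big1 ?addr0 // => k ks; rewrite !mxE.
case: (ltngtP k s) => [_|_|eks]; rewrite ?mul0r ?mulr0 //.
by rewrite -val_eqE /= eks eqxx in ks.
Qed.

Lemma right_left_eigvec_dot s : (s < n)%N -> (v s)^T *m w s = 1%:M.
Proof.
by move=> hs; rewrite -[_ *m _]trmxK trmx_mul trmxK left_right_eigvec_dot // trmx1.
Qed.

Lemma bidiag_right_eigvec0 : v 0 = delta_mx 0 0.
Proof. by apply/colP => -[[|k] hk]; rewrite !mxE //= big_geq. Qed.

Lemma bidiag_left_eigvec_max : w d = delta_mx ord_max 0.
Proof.
apply/colP => k; have kd : (k <= d)%N by rewrite -ltnS.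
by rewrite !mxE andbT big_geq ?ltnS // -val_eqE /= eqn_leq kd; case: leqP.
Qed.

Lemma prim_idem_upper_bidiag (s : 'I_n) : prim_idem U t s = v s *m (w s)^T.
Proof.
apply: (prim_idem_eigvec_outer (x := fun r : 'I_n => v r) (y := fun r : 'I_n => w r)) => // r.
- exact: upper_bidiag_right_eigvec.
- exact: trmx_upper_bidiag_left_eigvec.
- exact: left_right_eigvec_dot.
Qed.

Lemma prim_idem_trmx_upper_bidiag (s : 'I_n) : prim_idem U^T t s = w s *m (v s)^T.
Proof.
apply: (prim_idem_eigvec_outer (x := fun r : 'I_n => w r) (y := fun r : 'I_n => v r)) => // r.
- exact: trmx_upper_bidiag_left_eigvec.
- by rewrite trmxK; apply: upper_bidiag_right_eigvec.
- exact: right_left_eigvec_dot.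
Qed.

End UpperBidiagonal.

Section LowerBidiagonalPowers.
Variables (K : fieldType) (d : nat) (t : nat -> K).
Local Notation n := d.+1.
Local Notation L := (upper_bidiag d t (fun _ => 1))^T.
Local Notation e0 := (delta_mx 0 0 : 'cV[K]_n).

Lemma lower_bidiag_pow_col0 i :
  (forall k : 'I_n, (i < k)%N -> (L ^+ i *m e0) k 0 = 0) /\
  (forall k : 'I_n, k = i :> nat -> (L ^+ i *m e0) k 0 = 1).
Proof.
elim: i => [|i [IH0 IH1]].
  rewrite expr0 mul1mx; split=> k hk; rewrite mxE eqxx andbT.
    by rewrite -val_eqE /= gtn_eqF.
  by rewrite -val_eqE /= hk.
rewrite exprS -mulmxA; split=> k hk; rewrite trmx_upper_bidiag_mulmx_col IH0 ?mulr0 ?add0r.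
- by rewrite big1 // => l /eqP kl; rewrite IH0 ?mulr0 // -ltnS -kl.
- by rewrite (ltnW hk).
- have hi : (i < n)%N by rewrite (ltn_trans _ (ltn_ord k)) // hk.
  rewrite hk; under eq_bigl do rewrite eqSS eq_sym.
  by rewrite sum_ord_val_eq hi IH1 ?mul1r // inordK.
- by rewrite hk.
Qed.

Lemma lower_bidiag_pow_corner (x : 'cV[K]_n) (i : 'I_n) :
  (forall k : 'I_n, (k < i)%N -> x k 0 = 0) -> x i 0 = 1 ->
  (x^T *m L ^+ i *m e0) 0 0 = 1.
Proof.
have [y0 y1] := lower_bidiag_pow_col0 i.
move=> x0 x1; rewrite -mulmxA mxE (bigD1 i) //= big1 ?addr0.
  by rewrite mxE x1 y1 ?mul1r.
move=> k ki; rewrite mxE; have [kl|ik|/val_inj ek] := ltngtP k i.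
- by rewrite x0 ?mul0r.
- by rewrite y0 ?mulr0.
- by rewrite ek eqxx in ki.
Qed.

End LowerBidiagonalPowers.

Section OuterProducts.
Variables (K : fieldType) (n : nat).
Implicit Types a b c e : 'cV[K]_n.

Lemma mulmx_outer_mid a b c e (X : 'M_n) :
  a *m b^T *m X *m (c *m e^T) = (b^T *m X *m c) 0 0 *: (a *m e^T).
Proof.
have -> : a *m b^T *m X *m (c *m e^T) = a *m (b^T *m X *m c) *m e^T.
  by rewrite !mulmxA.
by rewrite {1}[b^T *m X *m c]mx11_scalar mul_mx_scalar -scalemxAl.
Qed.

Lemma mulmx_outer a b c e : a *m b^T *m (c *m e^T) = (b^T *m c) 0 0 *: (a *m e^T).
Proof. by rewrite -[a *m b^T]mulmx1 mulmx_outer_mid mulmx1. Qed.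

Lemma mxtrace_outer a e : \tr (a *m e^T) = (e^T *m a) 0 0.
Proof. by rewrite mxtrace_mulC trace_mx11. Qed.

Lemma trmx_delta_mulmx_entry (k : 'I_n) a : ((delta_mx k 0 : 'cV_n)^T *m a) 0 0 = a k 0.
Proof. by rewrite trmx_delta -rowE mxE. Qed.

Lemma trmx_mulmx_delta_entry (k : 'I_n) a : (a^T *m (delta_mx k 0 : 'cV_n)) 0 0 = a k 0.
Proof. by rewrite -colE !mxE. Qed.

End OuterProducts.

Section SplitBasisCoordinates.
Variables (K : fieldType) (d : nat) (ts ph : nat -> K).
Local Notation n := d.+1.

Lemma bidiag_right_eigvec_first (i : 'I_n) :
  bidiag_right_eigvec d ts ph i 0 0 = (\prod_(1 <= j < i.+1) ph j) / (tau_s ts i).[ts i].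
Proof.
rewrite mxE leq0n big_split prodfV big_add1 /= /tau_s horner_prod.
under [X in _ = _ / X]eq_bigr do rewrite hornerXsubC.
by rewrite -(big_mkord xpredT (fun h => ts i - ts h)).
Qed.

Lemma bidiag_left_eigvec_last (i : 'I_n) :
  bidiag_left_eigvec d ts ph i ord_max 0 =
  (\prod_(i.+1 <= j < n) ph j) / (eta_s d ts (d - i)).[ts i].
Proof.
rewrite mxE /= -ltnS ltn_ord big_split prodfV /eta_s horner_prod.
under [X in _ = _ / X]eq_bigr do rewrite hornerXsubC.
rewrite [X in _ * X^-1 = _]big_rev_mkord subSS.
by under [X in _ / X = _]eq_bigr do rewrite subSS.
Qed.

End SplitBasisCoordinates.

Lemma bidiag_eigvec_coord_ratio (K : fieldType) (d : nat) (ts ph ph2 : nat -> K) (i : 'I_d.+1) :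
  \prod_(i.+1 <= j < d.+1) ph2 j != 0 ->
  bidiag_left_eigvec d ts ph2 i ord_max 0 * bidiag_right_eigvec d ts ph i 0 0 /
    bidiag_left_eigvec d ts ph2 0 ord_max 0 =
  (\prod_(1 <= j < i.+1) ph j) / (\prod_(1 <= j < i.+1) ph2 j) *
  ((eta_s d ts d).[ts 0%N] / ((tau_s ts i).[ts i] * (eta_s d ts (d - i)).[ts i])).
Proof.
move=> P_neq0; rewrite (bidiag_left_eigvec_last ts ph2 ord0) subn0.
rewrite bidiag_left_eigvec_last bidiag_right_eigvec_first /=.
rewrite [\prod_(1 <= j < d.+1) ph2 j](big_cat_nat (n := i.+1)) //=.
set P := \prod_(i.+1 <= j < d.+1) ph2 j in P_neq0 *.
rewrite -[RHS]mul1r -(divff P_neq0) !invfM invrK; ring.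
Qed.

Section ReversedEigenvalues.
Variables (K : fieldType) (d : nat).
Local Notation n := d.+1.

Lemma rev_eigval_inj (t : nat -> K) : (forall i j : 'I_n, t i = t j -> i = j) ->
  forall i j : 'I_n, t (d - i)%N = t (d - j)%N -> i = j.
Proof. by move=> t_inj i j e; apply/rev_ord_inj/t_inj; rewrite /= !subSS. Qed.

Lemma prim_idem_trmx_upper_bidiag_rev (t ph : nat -> K) (s : 'I_n) :
  (forall i j : 'I_n, t i = t j -> i = j) ->
  prim_idem (upper_bidiag d (fun m => t (d - m)%N) ph)^T t s =
  bidiag_left_eigvec d (fun m => t (d - m)%N) ph (d - s) *m
  (bidiag_right_eigvec d (fun m => t (d - m)%N) ph (d - s))^T.
Proof.
move=> t_inj; have t'_inj := rev_eigval_inj t_inj.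
apply: (prim_idem_eigvec_outer
  (x := fun r : 'I_n => bidiag_left_eigvec d (fun m => t (d - m)%N) ph (d - r))
  (y := fun r : 'I_n => bidiag_right_eigvec d (fun m => t (d - m)%N) ph (d - r))) => // r;
  have hr : (d - r < n)%N by rewrite ltnS leq_subr.
- by rewrite trmx_upper_bidiag_left_eigvec // subKn // -ltnS.
- by rewrite trmxK upper_bidiag_right_eigvec // subKn // -ltnS.
- exact: right_left_eigvec_dot.
Qed.

End ReversedEigenvalues.

Section SplitModelTraces.
Variables (K : fieldType) (d : nat) (t ts ph : nat -> K).
Local Notation n := d.+1.
Hypothesis t_inj : forall i j : 'I_n, t i = t j -> i = j.
Hypothesis ts_inj : forall i j : 'I_n, ts i = ts j -> i = j.
Local Notation Es := (prim_idem (upper_bidiag d ts ph) ts).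
Local Notation v := (bidiag_right_eigvec d ts ph).
Local Notation w := (bidiag_left_eigvec d ts ph).
Local Notation L := (upper_bidiag d t (fun _ => 1))^T.
Local Notation L' := (upper_bidiag d (fun m => t (d - m)%N) (fun _ => 1))^T.

Lemma left_eigvec_lower_bidiag_pow (t' : nat -> K) (i : 'I_n) :
  ((w i)^T *m (upper_bidiag d t' (fun _ => 1))^T ^+ i *m (delta_mx 0 0 : 'cV_n)) 0 0 = 1.
Proof.
apply: lower_bidiag_pow_corner; last exact: bidiag_left_eigvec_diag.
exact: bidiag_left_eigvec_lt.
Qed.

Lemma split_model_trace (i : 'I_n) :
  \tr (Es i * L ^+ i * Es 0 * prim_idem L t 0) = v i 0 0 * \tr (Es 0 * prim_idem L t 0).
Proof.
rewrite (prim_idem_trmx_upper_bidiag _ t_inj ord0) bidiag_right_eigvec0.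
rewrite (prim_idem_upper_bidiag ph ts_inj ord0) (prim_idem_upper_bidiag ph ts_inj i).
rewrite -[nat_of_ord ord0]/0%N -!mulmxE bidiag_right_eigvec0 mulmx_outer_mid -scalemxAl.
rewrite !mulmx_outer !linearZ /= !mxtrace_outer left_eigvec_lower_bidiag_pow.
have e00 : (delta_mx 0 0 : 'cV[K]_n) 0 0 = 1 by rewrite mxE.
by rewrite !trmx_delta_mulmx_entry e00 mul1r mulr1 mulrC.
Qed.

Lemma split_model_rev_trace (i : 'I_n) :
  w 0 ord_max 0 * \tr (Es i * prim_idem L' t 0) =
  w i ord_max 0 * \tr (Es i * L' ^+ i * Es 0 * prim_idem L' t 0).
Proof.
rewrite (prim_idem_trmx_upper_bidiag_rev _ ord0 t_inj) subn0 bidiag_left_eigvec_max.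
rewrite (prim_idem_upper_bidiag ph ts_inj ord0) (prim_idem_upper_bidiag ph ts_inj i).
rewrite -[nat_of_ord ord0]/0%N -!mulmxE bidiag_right_eigvec0 mulmx_outer_mid -scalemxAl.
rewrite !mulmx_outer !linearZ /= !mxtrace_outer left_eigvec_lower_bidiag_pow.
by rewrite !trmx_mulmx_delta_entry mul1r mulrCA.
Qed.

Lemma bidiag_left_eigvec0_last_neq0 : (forall j, (1 <= j <= d)%N -> ph j != 0) ->
  w 0 ord_max 0 != 0.
Proof.
move=> ph_neq0; rewrite mxE /= prod_nat_neq0 // => r /andP[r0 rd].
rewrite mulf_neq0 ?invr_eq0 ?ph_neq0 ?r0 //.
by apply: (@eigval_sub_neq0 _ _ _ ts_inj 0%N r); rewrite // eq_sym -lt0n.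
Qed.

Lemma split_model_rev_trace0_neq0 : (forall j, (1 <= j <= d)%N -> ph j != 0) ->
  \tr (Es 0 * prim_idem L' t 0) != 0.
Proof.
move=> ph_neq0; have t'_inj := rev_eigval_inj t_inj.
rewrite (prim_idem_trmx_upper_bidiag_rev _ ord0 t_inj) subn0 bidiag_left_eigvec_max.
rewrite (prim_idem_upper_bidiag ph ts_inj ord0) -[nat_of_ord ord0]/0%N -mulmxE.
rewrite bidiag_right_eigvec0 mulmx_outer linearZ /= mxtrace_outer.
rewrite !trmx_mulmx_delta_entry mulf_neq0 ?bidiag_left_eigvec0_last_neq0 //.
rewrite mxE /= prod_nat_neq0 // => r /andP[_ rd].
rewrite mulf_neq0 ?invr_eq0 ?oner_eq0 //.
by apply: (@eigval_sub_neq0 _ _ (fun m => t (d - m)%N) t'_inj d r); rewrite // ?gtn_eqF // ltnW.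
Qed.

End SplitModelTraces.

Section LeonardSplitTraces.
Variables (K : fieldType) (d : nat) (A As : 'M[K]_d.+1) (th ths : nat -> K).
Hypothesis th_inj : forall i j : 'I_d.+1, th i = th j -> i = j.
Hypothesis ths_inj : forall i j : 'I_d.+1, ths i = ths j -> i = j.
Local Notation E0 := (prim_idem A th 0).
Local Notation Es := (prim_idem As ths).

Lemma first_split_trace phi (i : 'I_d.+1) : first_split_seq A As th ths phi ->
  \tr (Es i * A ^+ i * Es 0 * E0) = bidiag_right_eigvec d ths phi i 0 0 * \tr (Es 0 * E0).
Proof.
case=> _ [f [iso [fA fAs]]]; rewrite lower_bidiag_trmx in fA.
change (f As = upper_bidiag d ths phi) in fAs.
rewrite -[LHS]mul1r; apply: (alg_iso_mxtrace_eq iso).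
rewrite !(alg_isoM iso) (alg_isoX iso) !(alg_iso_prim_idem iso) fA fAs mul1r.
exact: split_model_trace.
Qed.

Lemma second_split_trace phi2 (i : 'I_d.+1) :
  first_split_seq A As (fun m => th (d - m)%N) ths phi2 ->
  bidiag_left_eigvec d ths phi2 0 ord_max 0 * \tr (Es i * E0) =
  bidiag_left_eigvec d ths phi2 i ord_max 0 * \tr (Es i * A ^+ i * Es 0 * E0).
Proof.
case=> _ [f [iso [fA fAs]]]; rewrite (lower_bidiag_trmx d (fun m => th (d - m)%N)) in fA.
change (f As = upper_bidiag d ths phi2) in fAs.
apply: (alg_iso_mxtrace_eq iso).
rewrite !(alg_isoM iso) (alg_isoX iso) !(alg_iso_prim_idem iso) fA fAs.
exact: split_model_rev_trace.
Qed.

Lemma second_split_trace0_neq0 phi2 :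
  first_split_seq A As (fun m => th (d - m)%N) ths phi2 -> \tr (Es 0 * E0) != 0.
Proof.
case=> phi2_neq0 [f [iso [fA fAs]]]; rewrite (lower_bidiag_trmx d (fun m => th (d - m)%N)) in fA.
change (f As = upper_bidiag d ths phi2) in fAs.
apply: (alg_iso_mxtrace_neq0 iso).
rewrite (alg_isoM iso) !(alg_iso_prim_idem iso) fA fAs.
exact: split_model_rev_trace0_neq0.
Qed.

End LeonardSplitTraces.

Unset Implicit Arguments. Set Strict Implicit.
Theorem theorem17p10 (K : fieldType) (d : nat) (A As : 'M[K]_d.+1)
  (th ths phi phi2 : nat -> K) :
  leonard_system A As th ths ->
  first_split_seq A As th ths phi ->
  first_split_seq A As (fun i => th (d - i)%N) ths phi2 ->
  forall i : nat, (i <= d)%N ->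
    k_LS A As th ths i =
      (\prod_(1 <= j < i.+1) phi j) / (\prod_(1 <= j < i.+1) phi2 j) *
      ((eta_s d ths d).[ths 0%N] /
       ((tau_s ths i).[ths i] * (eta_s d ths (d - i)).[ths i])).
Proof.
move=> [[th_inj _] [ths_inj _] _ _] split1 split2 i hi.
pose io : 'I_d.+1 := Ordinal (hi : (i < d.+1)%N).
have T0_neq0 := second_split_trace0_neq0 th_inj ths_inj split2.
have w0d_neq0 := bidiag_left_eigvec0_last_neq0 ths_inj split2.1.
have -> : k_LS A As th ths i =
    \tr (prim_idem As ths io * prim_idem A th 0) / \tr (prim_idem As ths 0 * prim_idem A th 0).
  by rewrite /k_LS /nu_LS mulrC [X in _ / X]mxtrace_mulC.
have -> : \tr (prim_idem As ths io * prim_idem A th 0) =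
    bidiag_left_eigvec d ths phi2 io ord_max 0 * bidiag_right_eigvec d ths phi io 0 0 /
    bidiag_left_eigvec d ths phi2 0 ord_max 0 * \tr (prim_idem As ths 0 * prim_idem A th 0).
  apply: (mulfI w0d_neq0); rewrite (second_split_trace th_inj ths_inj io split2).
  by rewrite (first_split_trace th_inj ths_inj io split1); field.
rewrite mulfK // bidiag_eigvec_coord_ratio // prod_nat_neq0 // => j /andP[ij jd].
by rewrite split2.1 // (leq_trans _ ij) // -ltnS jd.
Qed.
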